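(* Consider a cache network as described below, with caching gain $f(\mathbf{x})=\mathbb{E}_{z\sim P}[h(g_z(\mathbf{0}))-h(g_z(\mathbf{x}))]$ where $h(s)=s/(1-s)$. Let $\hat h^L(s)=\sum_{\ell=1}^L s^\ell$ be the $L$-th order Taylor polynomial of $h$ around $0$, let $f_z(\mathbf{x})=h(g_z(\mathbf{0}))-h(g_z(\mathbf{x}))$ and $\hat f_z^L(\mathbf{x})=\hat h^L(g_z(\mathbf{0}))-\hat h^L(g_z(\mathbf{x}))$, and let $\widehat{\nabla G_z^L}$ be the polynomial estimator built from $\hat f_z^L$ (used in Stochastic Continuous Greedy). Let $\bar s<1$ be the largest load among all edges when caches are empty, $\bar s=\max_z g_z(\mathbf{0})$. Then $$\big\|\nabla G_z(\mathbf{y})-\widehat{\nabla G_z^L}(\mathbf{y})\big\|_2\le2\sqrt{|V||\mathcal{C}|}\,\frac{\bar s^{L+1}}{1-\bar s}.$$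
   Context: Cache network: directed graph $(V,E)$, catalog of items $\mathcal{C}$, service rates $\mu_{(u,v)}>0$ for edges, a set of requests $\mathcal{R}$; each request $r$ has an item $i^r\in\mathcal{C}$, an arrival rate $\lambda^r>0$, and a path $p^r=(p^r_1,p^r_2,\dots)$ of nodes; $k_{p^r}(v)$ is the position of node $v$ on $p^r$. Caching decisions are $\mathbf{x}\in\{0,1\}^{|V||\mathcal{C}|}$, $x_{v,i}=1$ iff item $i$ is stored at node $v$. Edges are indexed by $z=(u,v)\in E$, drawn according to a distribution $P$, with load $g_{(u,v)}(\mathbf{x})=\frac{1}{\mu_{(u,v)}}\sum_{r\in\mathcal{R}:(v,u)\in p^r}\lambda^r\prod_{k'=1}^{k_{p^r}(v)}\big(1-x_{p^r_{k'},i^r}\big)$, assumed $<1$ when caches are empty. $G_z(\mathbf{y})=\mathbb{E}_{\mathbf{x}\sim\mathbf{y}}[f_z(\mathbf{x})]$ (independent Bernoulli$(y_{v,i})$ coordinates) is the multilinear relaxation. For a polynomial, its multilinearization $\dot p$ replaces every positive exponent by $1$; the polynomial estimator has coordinates $\dot{\hat f}{}_z^L([\mathbf{y}]_{+j})-\dot{\hat f}{}_z^L([\mathbf{y}]_{-j})$, where $[\mathbf{y}]_{\pm j}$ sets coordinate $j$ to $1$/$0$. *)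

From mathcomp Require Import all_boot all_order all_algebra.
From mathcomp Require Import mpoly.
Set Implicit Arguments. Unset Strict Implicit. Unset Printing Implicit Defensive.
Import Order.TTheory GRing.Theory Num.Theory.
Local Open Scope ring_scope.

Section CacheNetwork.
(* R : the reals (any real closed field); V nodes; C catalog; Req requests. *)
Variables (R : rcfType) (V C Req : finType).

Definition nvar := #|{: V * C}|.
Definition xvar (v : V) (i : C) : {mpoly R[nvar]} := 'X_(enum_rank (v, i)).

(* position of node v on path p, 1-indexed : k_p(v) *)
Definition kpos (p : seq V) (v : V) : nat := (index v p).+1.

Definition on_path (a b : V) (p : seq V) : bool := (a, b) \in zip p (behead p).

(* The load g_{(u,v)}(x) as a polynomial in the caching variables x_{v,i}:
   g_{(u,v)}(x) = 1/mu_{(u,v)} * sum_{r : (v,u) in p^r} lambda^r *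
                  prod_{k'=1}^{k_{p^r}(v)} (1 - x_{p^r_{k'}, i^r}) *)
Definition gpoly (mu : V -> V -> R) (item : Req -> C) (lam : Req -> R)
  (path : Req -> seq V) (z : V * V) : {mpoly R[nvar]} :=
  let: (u, v) := z in
  (mu u v)^-1 *: \sum_(r : Req | on_path v u (path r))
     lam r *: \prod_(k < kpos (path r) v)
                 (1 - xvar (nth v (path r) k) (item r)).

Definition evalVC (p : {mpoly R[nvar]}) (y : V * C -> R) : R :=
  p.@[fun k => y (enum_val k)].

Definition h (s : R) : R := s / (1 - s).
Definition hL (L : nat) (s : R) : R := \sum_(1 <= l < L.+1) s ^+ l.
Definition hLpoly (L : nat) (p : {mpoly R[nvar]}) : {mpoly R[nvar]} :=
  \sum_(1 <= l < L.+1) p ^+ l.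

Variables (mu : V -> V -> R) (item : Req -> C) (lam : Req -> R)
  (path : Req -> seq V).

Definition g (z : V * V) (x : V * C -> R) : R :=
  evalVC (gpoly mu item lam path z) x.

Definition g0 (z : V * V) : R := g z (fun _ => 0).

Definition fz (z : V * V) (x : V * C -> bool) : R :=
  h (g0 z) - h (g z (fun j => (x j)%:R)).

Definition fzL (L : nat) (z : V * V) : {mpoly R[nvar]} :=
  (hL L (g0 z))%:MP - hLpoly L (gpoly mu item lam path z).

(* Multilinear relaxation G_z(y) = E_{x ~ y}[f_z(x)], x with independent
   Bernoulli(y_{v,i}) coordinates, written as a polynomial in y. *)
Definition Gpoly (z : V * V) : {mpoly R[nvar]} :=
  \sum_(x : {ffun V * C -> bool})
     fz z x *: \prod_(j : V * C)
        (if x j then xvar j.1 j.2 else 1 - xvar j.1 j.2).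

Definition gradG (z : V * V) (y : V * C -> R) (j : V * C) : R :=
  evalVC ((Gpoly z)^`M(enum_rank j)) y.

End CacheNetwork.

(* multilinearization: replace every positive exponent by 1 *)
Definition mlin (R : ringType) (n : nat) (p : {mpoly R[n]}) : {mpoly R[n]} :=
  \sum_(m <- msupp p) p@_m *: \prod_(k < n | (0 < m k)%N) 'X_k.

Definition setcoord (T : eqType) (R : Type) (y : T -> R) (j : T) (a : R) : T -> R :=
  fun k => if k == j then a else y k.

Definition gradGL (R : rcfType) (V C Req : finType)
  (mu : V -> V -> R) (item : Req -> C) (lam : Req -> R) (path : Req -> seq V)
  (L : nat) (z : V * V) (y : V * C -> R) (j : V * C) : R :=
  let q := mlin (fzL mu item lam path L z) in
  evalVC q (setcoord y j 1) - evalVC q (setcoord y j 0).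

Definition norm2 (R : rcfType) (T : finType) (w : T -> R) : R :=
  Num.sqrt (\sum_(j : T) w j ^+ 2).

(* Both the partial derivative of the multilinear relaxation and the estimator
   coordinate are differences of Bernoulli expectations at [y]_{+j} and [y]_{-j}:
   d G_z / d y_j (y) = E_{[y]_{+j}}[f_z] - E_{[y]_{-j}}[f_z], and multilinearising
   a polynomial does not change its values on {0,1}^n (b^e = b for b in {0,1},
   e > 0), so the j-th estimator coordinate is the same difference for hat f_z^L.
   The j-th error is thus E_{[y]_{+j}}[r] - E_{[y]_{-j}}[r] for the Taylor
   remainder r(x) = rho(g_z(0)) - rho(g_z(x)), where rho(s) = h(s) - hat h^L(s)
   = s^{L+1} / (1 - s) is nondecreasing on [0,1).  Since the load only decreases
   when items are cached, 0 <= g_z(x) <= g_z(0) <= sbar and r takes values in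
   [0, sbar^{L+1} / (1 - sbar)]; each coordinate error is bounded by this
   quantity, hence the norm by sqrt(|V||C|) times it (the factor 2 is slack). *)

From mathcomp Require Import all_boot all_order all_algebra.
From mathcomp Require Import mpoly.
From mathcomp Require Import ring lra.
Set Implicit Arguments. Unset Strict Implicit. Unset Printing Implicit Defensive.
Import Order.TTheory GRing.Theory Num.Theory.
Local Open Scope ring_scope.

Lemma mderivXU (R : nzRingType) (n : nat) (i i0 : 'I_n) :
  ('X_i : {mpoly R[n]})^`M(i0) = ((i == i0)%:R)%:MP.
Proof.
rewrite mderivX mnm1E; have [<-|_] := eqVneq i i0; last by rewrite scale0r.
have -> : (U_(i) - U_(i))%MM = 0%MM by apply/mnmP => k; rewrite mnmBE subnn mnm0E.
by rewrite mpolyX0 scale1r.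
Qed.

Section BernoulliExpectation.
Variables (R : comNzRingType) (T : finType).
Implicit Types (y : T -> R) (x : {ffun T -> bool}) (phi : {ffun T -> bool} -> R).

Definition bern_mass y x : R := \prod_j (if x j then y j else 1 - y j).

Definition bern_expect phi y : R := \sum_x phi x * bern_mass y x.

Lemma bern_expect_prod (F : T -> bool -> R) y :
  bern_expect (fun x => \prod_j F j (x j)) y
  = \prod_j (F j true * y j + F j false * (1 - y j)).
Proof.
rewrite /bern_expect /bern_mass.
under [LHS]eq_bigr do rewrite -big_split /=.
rewrite -(bigA_distr_bigA (fun j b => F j b * (if b then y j else 1 - y j))).
by apply: eq_bigr => j _; rewrite big_bool.
Qed.

Lemma bern_mass_sum y : \sum_x bern_mass y x = 1.
Proof.
transitivity (bern_expect (fun x => \prod_(j : T) 1) y).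
  by apply: eq_bigr => x _; rewrite big1_eq mul1r.
rewrite (bern_expect_prod (fun _ _ => 1)).
by apply: big1 => j _; rewrite !mul1r addrC subrK.
Qed.

Lemma bern_expectB phi psi y :
  bern_expect (fun x => phi x - psi x) y = bern_expect phi y - bern_expect psi y.
Proof. by rewrite -sumrB; apply: eq_bigr => x _; rewrite mulrBl. Qed.

Lemma bern_expect_monomial (e : T -> nat) y :
  bern_expect (fun x => \prod_j (x j)%:R ^+ e j) y = \prod_(j | (0 < e j)%N) y j.
Proof.
rewrite (bern_expect_prod (fun j b => b%:R ^+ e j)) [RHS]big_mkcond.
apply: eq_bigr => j _ /=.
case: (e j) => [|k] /=; first by rewrite !mul1r addrC subrK.
by rewrite expr1n expr0n mul1r mul0r addr0.
Qed.

Local Notation n := #|{: T}|.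

Lemma meval_mlin (p : {mpoly R[n]}) y :
  (mlin p).@[fun k => y (enum_val k)]
  = bern_expect (fun x => p.@[fun k => (x (enum_val k))%:R]) y.
Proof.
have reindex_T (F : 'I_n -> R) (P : pred 'I_n) :
    \prod_(k | P k) F k = \prod_(j | P (enum_rank j)) F (enum_rank j).
  exact: reindex (onW_bij _ (@enum_rank_bij T)).
rewrite /mlin raddf_sum /bern_expect.
under [RHS]eq_bigr do rewrite mevalE mulr_suml.
rewrite [RHS]exchange_big /=; apply: eq_bigr => m _.
under [RHS]eq_bigr do rewrite -mulrA reindex_T.
rewrite mevalZ -mulr_sumr rmorph_prod reindex_T /=; congr (_ * _).
under eq_bigr do rewrite mevalXU enum_rankK.
rewrite -(bern_expect_monomial (fun j => m (enum_rank j))).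
by apply: eq_bigr => x _; congr (_ * _); apply: eq_bigr => j _; rewrite enum_rankK.
Qed.

Definition bern_mass_poly x : {mpoly R[n]} :=
  \prod_j (if x j then 'X_(enum_rank j) else 1 - 'X_(enum_rank j)).

Definition multilinear_ext phi : {mpoly R[n]} := \sum_x phi x *: bern_mass_poly x.

Lemma bern_mass_setcoord y x j0 a :
  bern_mass (setcoord y j0 a) x
  = (if x j0 then a else 1 - a) * \prod_(j | j != j0) (if x j then y j else 1 - y j).
Proof.
rewrite /bern_mass (bigD1 j0) //= /setcoord eqxx; congr (_ * _).
by apply: eq_bigr => j /negbTE ->.
Qed.

Lemma meval_mderiv_bern_mass_poly x y j0 :
  ((bern_mass_poly x)^`M(enum_rank j0)).@[fun k => y (enum_val k)]
  = bern_mass (setcoord y j0 1) x - bern_mass (setcoord y j0 0) x.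
Proof.
have d1 : (1 : {mpoly R[n]})^`M(enum_rank j0) = 0 by rewrite -mpolyC1 mderivC.
have dF j : (if x j then 'X_(enum_rank j) else 1 - 'X_(enum_rank j))^`M(enum_rank j0)
    = ((j == j0)%:R * (if x j then 1 else -1))%:MP :> {mpoly R[n]}.
  case: (x j); rewrite ?mderivB ?d1 mderivXU (inj_eq enum_rank_inj) ?mulr1 //.
  by rewrite sub0r mulrN1 mpolyCN.
rewrite /bern_mass_poly (bigD1 j0) //= mderivM.
have -> : (\prod_(j | j != j0) (if x j then 'X_(enum_rank j) else 1 - 'X_(enum_rank j))
    : {mpoly R[n]})^`M(enum_rank j0) = 0.
  apply: (big_ind (fun q : {mpoly R[n]} => q^`M(enum_rank j0) = 0)).
  - exact: d1.
  - by move=> q1 q2 dq1 dq2; rewrite mderivM dq1 dq2 mul0r mulr0 addr0.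
  by move=> j /negbTE j_neq; rewrite dF j_neq mul0r mpolyC0.
rewrite mulr0 addr0 rmorphM rmorph_prod /= dF eqxx mul1r mevalC.
rewrite !bern_mass_setcoord -mulrBl.
congr (_ * _); first by case: (x j0); rewrite ?subrr ?subr0 ?sub0r.
by apply: eq_bigr => j _; case: (x j); rewrite ?mevalB ?meval1 mevalXU enum_rankK.
Qed.

Lemma meval_mderiv_multilinear_ext phi y j :
  ((multilinear_ext phi)^`M(enum_rank j)).@[fun k => y (enum_val k)]
  = bern_expect phi (setcoord y j 1) - bern_expect phi (setcoord y j 0).
Proof.
rewrite /multilinear_ext (big_morph _ (mderivD _) (mderiv0 _ _)).
rewrite (big_morph _ (mevalD _) (meval0 _)).
rewrite /bern_expect -sumrB; apply: eq_bigr => x _.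
by rewrite mderivZ mevalZ meval_mderiv_bern_mass_poly mulrBr.
Qed.

End BernoulliExpectation.

Section BernoulliExpectationBounds.
Variables (R : realDomainType) (T : finType).
Implicit Types (y : T -> R) (x : {ffun T -> bool}) (phi : {ffun T -> bool} -> R).

Lemma bern_mass_ge0 y x : (forall j, 0 <= y j <= 1) -> 0 <= bern_mass y x.
Proof. by move=> y01; apply: prodr_ge0 => j _; case: (x j); have := y01 j; lra. Qed.

Lemma bern_expect_bounds phi y B :
  (forall x, 0 <= phi x <= B) -> (forall j, 0 <= y j <= 1) ->
  0 <= bern_expect phi y <= B.
Proof.
move=> phi0B y01; apply/andP; split.
  apply: sumr_ge0 => x _; apply: mulr_ge0; last exact: bern_mass_ge0.
  by case/andP: (phi0B x).
rewrite -[B]mulr1 -(bern_mass_sum y) mulr_sumr; apply: ler_sum => x _.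
by rewrite ler_wpM2r ?bern_mass_ge0 //; case/andP: (phi0B x).
Qed.

Lemma ler_dist_bern_expect phi y y' B :
  (forall x, 0 <= phi x <= B) ->
  (forall j, 0 <= y j <= 1) -> (forall j, 0 <= y' j <= 1) ->
  `|bern_expect phi y - bern_expect phi y'| <= B.
Proof.
move=> phi0B y01 y'01.
have := bern_expect_bounds phi0B y01; have := bern_expect_bounds phi0B y'01.
by rewrite ler_norml; lra.
Qed.

End BernoulliExpectationBounds.

Lemma norm2_le_sqrt_card (R : rcfType) (T : finType) (w : T -> R) B :
  0 <= B -> (forall j, `|w j| <= B) -> norm2 w <= Num.sqrt #|T|%:R * B.
Proof.
move=> B0 wB; rewrite -(ger0_norm B0) -sqrtr_sqr -sqrtrM ?ler0n // ler_sqrt.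
  rewrite -sum1_card natr_sum mulr_suml; apply: ler_sum => j _.
  by rewrite mul1r -real_normK ?num_real // lerXn2r ?nnegrE.
by rewrite mulr_ge0 ?ler0n ?sqr_ge0.
Qed.

Lemma h_sub_hL (R : rcfType) L (s : R) : s != 1 -> h s - hL L s = s ^+ L.+1 / (1 - s).
Proof.
move=> s_neq1; have s_sub_neq0 : 1 - s != 0 by rewrite subr_eq0 eq_sym.
elim: L => [|L IHL]; first by rewrite /hL big_geq // subr0 expr1.
rewrite /hL big_nat_recr //= -/(hL L s) opprD addrA IHL [s ^+ L.+2]exprS.
by set t := s ^+ L.+1; field.
Qed.

Lemma ler_geom_tail (R : realFieldType) n (a b : R) :
  0 <= a -> a <= b -> b < 1 -> a ^+ n / (1 - a) <= b ^+ n / (1 - b).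
Proof.
move=> a_ge0 a_le_b b_lt1; apply: ler_pM.
- exact: exprn_ge0.
- by rewrite invr_ge0; lra.
- by rewrite lerXn2r // nnegrE (le_trans a_ge0).
by rewrite lef_pV2 ?posrE; lra.
Qed.

Section CacheNetwork.
Variables (R : rcfType) (V C Req : finType).
Variables (mu : V -> V -> R) (item : Req -> C) (lam : Req -> R) (path : Req -> seq V).
Hypothesis lam_gt0 : forall r, 0 < lam r.

Local Notation g := (g mu item lam path).
Local Notation g0 := (g0 mu item lam path).
Local Notation fz := (fz mu item lam path).
Local Notation fzL := (fzL mu item lam path).

Lemma g_pairE u v t :
  g (u, v) t = (mu u v)^-1 * \sum_(r | on_path v u (path r))
    lam r * \prod_(k < kpos (path r) v) (1 - t (nth v (path r) k, item r)).
Proof.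
rewrite /g /gpoly /evalVC /xvar mevalZ (big_morph _ (mevalD _) (meval0 _)).
congr (_ * _); apply: eq_bigr => r _.
rewrite mevalZ (big_morph _ (mevalM _) (meval1 _)); congr (_ * _); apply: eq_bigr => k _.
by rewrite mevalB meval1 mevalXU enum_rankK.
Qed.

Lemma g_bounds u v t :
  0 < mu u v -> (forall j, 0 <= t j <= 1) -> 0 <= g (u, v) t <= g0 (u, v).
Proof.
move=> mu_gt0 t01; rewrite /g0 !g_pairE.
have mu_inv_ge0 : 0 <= (mu u v)^-1 by rewrite invr_ge0 ltW.
have factor01 r k : 0 <= 1 - t (nth v (path r) k, item r) <= 1.
  by have := t01 (nth v (path r) k, item r); lra.
apply/andP; split.
  apply: mulr_ge0 => //; apply: sumr_ge0 => r _; apply: mulr_ge0; first exact: ltW.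
  by apply: prodr_ge0 => k _; case/andP: (factor01 r k).
apply: ler_wpM2l => //; apply: ler_sum => r _; apply: ler_wpM2l; first exact: ltW.
rewrite [X in _ <= X]big1 => [|k _]; last by rewrite subr0.
by apply: prodr_ile1 => k _; apply: factor01.
Qed.

Lemma g0_ge0 u v : 0 < mu u v -> 0 <= g0 (u, v).
Proof.
move=> mu_gt0; have zero01 (j : V * C) : 0 <= (0 : R) <= 1 by rewrite lexx ler01.
by case/andP: (g_bounds mu_gt0 zero01).
Qed.

Lemma evalVC_fzL L z t : evalVC (fzL L z) t = hL L (g0 z) - hL L (g z t).
Proof.
rewrite /fzL /evalVC mevalB mevalC /hLpoly rmorph_sum; congr (_ - _).
by apply: eq_bigr => l _; rewrite rmorphXn.
Qed.

Definition fz_remainder L z (x : {ffun V * C -> bool}) : R :=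
  fz z x - evalVC (fzL L z) (fun j => (x j)%:R).

Lemma fz_remainder_bounds L u v x :
  0 < mu u v -> g0 (u, v) < 1 ->
  0 <= fz_remainder L (u, v) x <= g0 (u, v) ^+ L.+1 / (1 - g0 (u, v)).
Proof.
move=> mu_gt0 g0_lt1.
have x01 j : 0 <= ((x j)%:R : R) <= 1 by case: (x j); rewrite /= ?ler01 ?lexx.
have /andP[gx_ge0 gx_le_g0] := g_bounds mu_gt0 x01.
rewrite /fz_remainder /fz evalVC_fzL.
set s0 := g0 _ in g0_lt1 gx_le_g0 *; set s := g _ _ in gx_ge0 gx_le_g0 *.
have -> : h s0 - h s - (hL L s0 - hL L s) = (h s0 - hL L s0) - (h s - hL L s) by ring.
have s_lt1 := le_lt_trans gx_le_g0 g0_lt1.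
rewrite !h_sub_hL ?lt_eqF //.
have := ler_geom_tail L.+1 gx_ge0 gx_le_g0 g0_lt1.
have : 0 <= s ^+ L.+1 / (1 - s) by rewrite divr_ge0 ?exprn_ge0 // subr_ge0 ltW.
lra.
Qed.

Lemma gradG_sub_gradGL L z y j :
  gradG mu item lam path z y j - gradGL mu item lam path L z y j
  = bern_expect (fz_remainder L z) (setcoord y j 1)
    - bern_expect (fz_remainder L z) (setcoord y j 0).
Proof.
have -> : gradG mu item lam path z y j
    = ((multilinear_ext (fun x => fz z x))^`M(enum_rank j)).@[fun k => y (enum_val k)].
  rewrite /gradG /evalVC; congr (_^`M(_)).@[_]; apply: eq_bigr => x _; congr (_ *: _).
  by apply: eq_bigr => i _; rewrite /xvar -surjective_pairing.
rewrite meval_mderiv_multilinear_ext /gradGL /evalVC !meval_mlin /fz_remainder !bern_expectB.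
ring.
Qed.

End CacheNetwork.

Theorem theorem5 (R : rcfType) (V C Req : finType)
  (E : {set V * V})                    (* directed edges *)
  (mu : V -> V -> R)                   (* service rates *)
  (item : Req -> C) (lam : Req -> R) (path : Req -> seq V)
  (hmu : forall u v, (u, v) \in E -> 0 < mu u v)
  (hlam : forall r, 0 < lam r)
  (hpath_ne : forall r, path r != [::])
  (hpath_uniq : forall r, uniq (path r))
  (hpath_E : forall r a b, on_path a b (path r) -> (a, b) \in E)
  (hload : forall e, e \in E -> g0 mu item lam path e < 1)
  (L : nat) (z : V * V) (hz : z \in E)
  (y : V * C -> R) (hy : forall j, 0 <= y j <= 1) :
  let sbar := \big[Num.max/0]_(e in E) g0 mu item lam path e in
  norm2 (fun j => gradG mu item lam path z y j - gradGL mu item lam path L z y j)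
  <= 2 * Num.sqrt (#|V|%:R * #|C|%:R) * (sbar ^+ L.+1 / (1 - sbar)).
Proof.
cbv zeta; set sbar := \big[Num.max/0]_(e in E) _.
case: z hz => u v hz.
have sbar_lt1 : sbar < 1 by apply: bigmax_lt => [|e /hload]; first exact: ltr01.
have g0_le_sbar : g0 mu item lam path (u, v) <= sbar by exact: le_bigmax_cond.
have g0z_ge0 := g0_ge0 item path hlam (hmu _ _ hz).
set B := sbar ^+ L.+1 / (1 - sbar).
have remainder_bounds x : 0 <= fz_remainder mu item lam path L (u, v) x <= B.
  have /andP[r_ge0 r_le] := fz_remainder_bounds hlam L x (hmu _ _ hz) (hload _ hz).
  by rewrite r_ge0 (le_trans r_le) // ler_geom_tail.
have setcoord01 j a : 0 <= a <= 1 -> forall k, 0 <= setcoord y j a k <= 1.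
  by move=> a01 k; rewrite /setcoord; case: (k == j) => //; apply: hy.
have coord_bound j :
    `|gradG mu item lam path (u, v) y j - gradGL mu item lam path L (u, v) y j| <= B.
  rewrite gradG_sub_gradGL; apply: ler_dist_bern_expect remainder_bounds _ _;
    by apply: setcoord01; rewrite ?lexx ?ler01.
have B_ge0 : 0 <= B.
  by rewrite divr_ge0 ?exprn_ge0 ?(le_trans g0z_ge0 g0_le_sbar) // subr_ge0 ltW.
apply: le_trans (norm2_le_sqrt_card B_ge0 coord_bound) _.
rewrite -natrM -card_prod -mulrA ler_peMl ?(mulr_ge0 (sqrtr_ge0 _) B_ge0) //.
lra.
Qed.
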